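(* Let $p$ be an odd prime and $N=\mathbb Z_{p^2}$. Let $\Phi$ be the unique subgroup of order $p-1$ of the unit group $\mathbb Z_{p^2}^\times$, acting on $(\mathbb Z_{p^2},+)$ by multiplication. Let $M=\{p\}$, so that the orbit $p\Phi = p\mathbb Z_{p^2}\setminus\{0\}$ is the zero multiplier orbit, and let the remaining orbit representatives $R\setminus M$ be the elements of a coset $c+p\mathbb Z_{p^2}$ with $c$ a unit. With multiplication $a*b=0$ if $b\in p\mathbb Z_{p^2}$ and $a*b=a\phi_b$ otherwise (where $b=r_b\phi_b$, $r_b\in R\setminus M$, $\phi_b\in\Phi$), $(N,+,* )$ is a planar nearring and $D(N)=p\mathbb Z_{p^2}$; in particular all distributive elements are zero multipliers.
   Context: A (right) nearring $(N,+,* )$ is a set with a group $(N,+)$, a semigroup $(N,* )$, and right distributivity $(a+b)*c=a*c+b*c$. $N$ is planar if the relation $a\cong b$ ($x*a=x*b$ for all $x$) has at least $3$ classes and for all $a,b,c$ with $a\not\cong b$ the equation $x*a=x*b+c$ has a unique solution. Zero multipliers are the $n$ with $x*n=0$ for all $x$. $D(N)=\{n: n*(a+b)=n*a+n*b\ \forall a,b\}$. *)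

From HB Require Import structures.
From mathcomp Require Import all_boot all_order all_algebra all_fingroup.
Set Implicit Arguments. Unset Strict Implicit. Unset Printing Implicit Defensive.
Import GRing.Theory.
Local Open Scope ring_scope.

Definition nearring (N : zmodType) (mul : N -> N -> N) : Prop :=
  associative mul /\ (forall a b c : N, mul (a + b) c = mul a c + mul b c).

Definition ncong (N : zmodType) (mul : N -> N -> N) (a b : N) : Prop :=
  forall x : N, mul x a = mul x b.

Definition planar (N : zmodType) (mul : N -> N -> N) : Prop :=
  (exists a b c : N, [/\ ~ ncong mul a b, ~ ncong mul a c & ~ ncong mul b c]) /\
  (forall a b c : N, ~ ncong mul a b -> exists! x : N, mul x a = mul x b + c).

Definition distrib_elt (N : zmodType) (mul : N -> N -> N) (n : N) : Prop :=
  forall a b : N, mul n (a + b) = mul n a + mul n b.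

Definition zero_mult (N : zmodType) (mul : N -> N -> N) (n : N) : Prop :=
  forall x : N, mul x n = 0.

Definition in_pZ (p : nat) (x : 'Z_(p ^ 2)) : bool := (p %| (x : nat))%N.

(** phi_b: the element of Phi with b * phi^-1 in c + p Z_{p^2}
    (i.e. b = r_b phi_b with r_b in the coset c + pZ) *)
Definition phi_of (p : nat) (Phi : {set {unit 'Z_(p ^ 2)}}) (c b : 'Z_(p ^ 2))
  : 'Z_(p ^ 2) :=
  match [pick f in Phi | in_pZ (b / val f - c)] with
  | Some f => val f
  | None => 1
  end.

Definition Zmul (p : nat) (Phi : {set {unit 'Z_(p ^ 2)}}) (c : 'Z_(p ^ 2))
  (a b : 'Z_(p ^ 2)) : 'Z_(p ^ 2) :=
  if in_pZ b then 0 else a * phi_of Phi c b.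

From HB Require Import structures.
From mathcomp Require Import all_boot all_order all_algebra all_fingroup.
From mathcomp Require Import cyclic zify.
Set Implicit Arguments. Unset Strict Implicit. Unset Printing Implicit Defensive.
Import GRing.Theory FinRing.Theory.
Local Open Scope ring_scope.

(* Reduction mod p restricts to a bijection from Phi onto the units of Z_p:
   an element of Phi that is 1 mod p has order dividing both p (since
   (1 + x)^p = 1 + p x = 1 for x in pZ) and |Phi| = p - 1, so it is 1; and an
   injection of p - 1 elements into p - 1 residues is onto.  Hence phi_b is the
   unique element of Phi congruent to b / c mod p, right multiplication by b is
   multiplication by phi_b or by 0, and phi_(b phi) = phi_b phi.  This gives
   associativity, and planarity because phi_a - phi_b is a unit whenever the
   multipliers differ.  An element n of pZ is distributive since
   n * x = n x / c.  A distributive unit n would make b |-> phi_b additive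
   off pZ, forcing phi_(c k) = k, hence k in Phi, for 0 < k < p; then 2 and
   (p + 1)/2 lie in Phi, and so does their product p + 1, which is 1 mod p but
   not 1. *)

Section ModP.

Variable p : nat.
Hypothesis p_pr : prime p.
Local Notation Z := 'Z_(p ^ 2).

Lemma p2_gt1 : (1 < p ^ 2)%N.
Proof. by rewrite -(exp1n 2) ltn_exp2r ?prime_gt1. Qed.

Lemma in_pZ_natr (n : nat) : in_pZ (n%:R : Z) = (p %| n)%N.
Proof.
by rewrite /in_pZ val_Zp_nat ?p2_gt1 // /dvdn modn_dvdm // dvdn_exp.
Qed.

Lemma in_pZM (x y : Z) : in_pZ (x * y) = in_pZ x || in_pZ y.
Proof. by rewrite -[x]natr_Zp -[y]natr_Zp -natrM !in_pZ_natr Euclid_dvdM. Qed.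

Lemma in_pZD (x y : Z) : in_pZ x -> in_pZ y -> in_pZ (x + y).
Proof. by rewrite -[x]natr_Zp -[y]natr_Zp -natrD !in_pZ_natr; apply: dvdn_add. Qed.

Lemma in_pZ0 : in_pZ (0 : Z).
Proof. exact: dvdn0. Qed.

Lemma in_pZ_charp : in_pZ (p%:R : Z).
Proof. by rewrite in_pZ_natr. Qed.

Lemma unitZ_in_pZ (x : Z) : (x \is a GRing.unit) = ~~ in_pZ x.
Proof.
by rewrite -{1}[x]natr_Zp unitZpE ?p2_gt1 // coprime_pexpl // prime_coprime.
Qed.

Lemma in_pZMr (x u : Z) : u \is a GRing.unit -> in_pZ (x * u) = in_pZ x.
Proof. by rewrite unitZ_in_pZ in_pZM => /negbTE ->; rewrite orbF. Qed.

Lemma in_pZN (x : Z) : in_pZ (- x) = in_pZ x.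
Proof. by rewrite -mulrN1 in_pZMr ?unitrN ?unitr1. Qed.

Lemma in_pZ_subC (x y : Z) : in_pZ (x - y) = in_pZ (y - x).
Proof. by rewrite -in_pZN opprB. Qed.

Lemma in_pZ_subtrans (x y z : Z) :
  in_pZ (x - y) -> in_pZ (y - z) -> in_pZ (x - z).
Proof. by move=> hxy /(in_pZD hxy); rewrite addrA subrK. Qed.

Lemma in_pZ_mul0 (x y : Z) : in_pZ x -> in_pZ y -> x * y = 0.
Proof.
rewrite -[x]natr_Zp -[y]natr_Zp -natrM !in_pZ_natr => hx hy.
have /eqP hxy : (p ^ 2 %| x * y)%N.
  by apply: dvdn_trans (dvdn_mul hx hy); rewrite expnS expn1.
by rewrite -Zp_nat_mod ?p2_gt1 // hxy.
Qed.

Lemma in_pZ_subE (x y : Z) : in_pZ (x - y) = ((x : nat) == y %[mod p])%N.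
Proof.
have {2}-> : x = ((y : nat) + ((x - y)%R : Z))%:R.
  by rewrite natrD !natr_Zp addrC subrK.
rewrite val_Zp_nat ?p2_gt1 // modn_dvdm ?dvdn_exp // /in_pZ /dvdn.
by rewrite -{2}[(y : nat)]addn0 eqn_modDl mod0n eq_sym.
Qed.

Lemma exp1pZ (x : Z) n : in_pZ x -> (1 + x) ^+ n = 1 + n%:R * x.
Proof.
move=> hx; elim: n => [|n IH]; first by rewrite expr0 mul0r addr0.
rewrite exprS IH mulrDl mul1r mulrDr mulr1 mulrCA (in_pZ_mul0 hx hx) mulr0.
by rewrite addr0 mulrSr mulrDl mul1r addrA.
Qed.

Lemma odd_prime_gt2 : odd p -> (2 < p)%N.
Proof. by move: (prime_gt1 p_pr); rewrite leq_eqVlt => /predU1P[<- | ]. Qed.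

Lemma natr_p_neq0 : (p%:R : Z) != 0.
Proof.
have p_lt_p2 : (p < p ^ 2)%N by rewrite -{1}[p]expn1 ltn_exp2l ?prime_gt1.
by rewrite -(inj_eq val_inj) /= val_Zp_nat ?p2_gt1 // modn_small // -lt0n prime_gt0.
Qed.

Section Phi.

Variable Phi : {group {unit Z}}.
Hypothesis card_Phi : #|Phi| = (p - 1)%N.

Lemma Phi_inj_modp (f g : {unit Z}) : f \in Phi -> g \in Phi ->
  in_pZ (val f - val g) -> f = g.
Proof.
move=> fP gP hfg; set h := (f * g^-1)%g.
have hP : h \in Phi by rewrite groupM ?groupV.
have h1 : in_pZ (val h - 1).
  rewrite val_unitM val_unitV -(divrr (valP g)) -mulrBl in_pZMr //.
  by rewrite unitrV; apply: valP.
have hp : (h ^+ p = 1)%g.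
  apply: val_inj; rewrite val_unitX val_unit1 -(subrK 1 (val h)) addrC exp1pZ //.
  by rewrite (in_pZ_mul0 in_pZ_charp h1) addr0.
have : (h ^+ (p - 1).+1 = 1)%g by rewrite subn1 prednK ?prime_gt0.
rewrite expgS -card_Phi expg_cardG // mulg1 => h_eq1.
by apply/eqP; rewrite eq_mulgV1 -/h h_eq1.
Qed.

Lemma Phi_surj_modp (u : Z) : u \is a GRing.unit ->
  exists2 f : {unit Z}, f \in Phi & in_pZ (val f - u).
Proof.
move=> hu; have p_gt0 := prime_gt0 p_pr.
pose r (x : Z) : 'I_p := Ordinal (ltn_pmod (x : nat) p_gt0).
pose i0 : 'I_p := Ordinal p_gt0.
have r_unit (x : Z) : x \is a GRing.unit -> r x != i0.
  rewrite unitZ_in_pZ; apply: contra => /eqP/(congr1 val) /= hx.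
  by rewrite /in_pZ /dvdn hx.
pose rPhi := (fun f : {unit Z} => r (val f)) @: Phi.
have rPhiE : rPhi = [set~ i0].
  apply/eqP; rewrite eqEcard cardsC1 card_ord card_in_imset.
    rewrite card_Phi subn1 leqnn andbT.
    by apply/subsetP => _ /imsetP[f _ ->]; rewrite in_setC1 r_unit ?(valP f).
  move=> f g fP gP /(congr1 val) /= e.
  by apply: Phi_inj_modp; rewrite // in_pZ_subE; apply/eqP.
have : r u \in rPhi by rewrite rPhiE in_setC1 r_unit.
case/imsetP=> f fP /(congr1 val) /= e.
by exists f; rewrite // in_pZ_subE e.
Qed.

Variable c : Z.
Hypothesis c_unit : c \is a GRing.unit.

Lemma in_pZ_divC (b g : Z) : g \is a GRing.unit ->
  in_pZ (b / g - c) = in_pZ (g - b / c).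
Proof.
move=> g_unit; rewrite -(in_pZMr (b / g - c) (_ : g / c \is a GRing.unit)).
  by rewrite in_pZ_subC mulrBl -!mulrA mulKr // mulrCA divrr // mulr1.
by rewrite unitrMl ?unitrV.
Qed.

Lemma phi_ofE (b : Z) (f : {unit Z}) : f \in Phi ->
  in_pZ (val f - b / c) -> phi_of Phi c b = val f.
Proof.
move=> fP hf; rewrite /phi_of; case: pickP => [g /andP[gP hg] | no_g].
  congr val; apply: Phi_inj_modp => //.
  rewrite in_pZ_divC ?(valP g) // in hg.
  by apply: in_pZ_subtrans hg _; rewrite in_pZ_subC.
by move: (no_g f); rewrite fP in_pZ_divC ?(valP f) ?hf.
Qed.

Lemma phi_ofP (b : Z) : ~~ in_pZ b -> exists2 f : {unit Z}, f \in Phi &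
  phi_of Phi c b = val f /\ in_pZ (val f - b / c).
Proof.
move=> hb; have [|f fP hf] := @Phi_surj_modp (b / c).
  by rewrite unitrMl ?unitrV // unitZ_in_pZ.
by exists f => //; split; first exact: phi_ofE.
Qed.

Lemma phi_of_cM (f : {unit Z}) : f \in Phi -> phi_of Phi c (c * val f) = val f.
Proof.
by move=> fP; apply: phi_ofE; rewrite // mulrAC divrr // mul1r subrr in_pZ0.
Qed.

Lemma phi_of_c : phi_of Phi c c = 1.
Proof. by have := phi_of_cM (group1 Phi); rewrite val_unit1 mulr1. Qed.

Lemma phi_ofM (b : Z) (f : {unit Z}) : ~~ in_pZ b -> f \in Phi ->
  phi_of Phi c (b * val f) = phi_of Phi c b * val f.
Proof.
move=> hb fP; have [g gP [-> hg]] := phi_ofP hb.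
rewrite -val_unitM; apply: phi_ofE; first by rewrite groupM.
by rewrite val_unitM mulrAC -mulrBl in_pZMr ?(valP f).
Qed.

Local Notation mul := (Zmul Phi c).

Lemma Zmul0 (x b : Z) : in_pZ b -> mul x b = 0.
Proof. by rewrite /Zmul => ->. Qed.

Lemma ZmulE (x b : Z) : ~~ in_pZ b -> mul x b = x * phi_of Phi c b.
Proof. by rewrite /Zmul => /negbTE ->. Qed.

Lemma Zmul_assoc : associative mul.
Proof.
move=> a b d; have [hd | hd] := boolP (in_pZ d).
  by rewrite !(Zmul0 _ hd) Zmul0 ?in_pZ0.
have [fd fdP [ed _]] := phi_ofP hd; rewrite !(ZmulE _ hd) ed.
have [hb | hb] := boolP (in_pZ b).
  by rewrite (Zmul0 _ hb) mul0r Zmul0 // in_pZM hb.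
have hbd : ~~ in_pZ (b * val fd) by rewrite in_pZMr ?(valP fd).
by rewrite !ZmulE // phi_ofM // mulrA.
Qed.

Lemma Zmul_addl (a b d : Z) : mul (a + b) d = mul a d + mul b d.
Proof. by rewrite /Zmul; case: ifP => _; rewrite ?addr0 ?mulrDl. Qed.

Definition multiplier (B : Z) := B = 0 \/ exists2 f : {unit Z}, f \in Phi & B = val f.

Lemma ZmulP (b : Z) : exists2 B, multiplier B & forall x, mul x b = x * B.
Proof.
have [hb | hb] := boolP (in_pZ b).
  by exists 0; [left | move=> x; rewrite Zmul0 ?mulr0].
have [f fP [ef _]] := phi_ofP hb.
by exists (val f); [right; exists f | move=> x; rewrite ZmulE // ef].
Qed.

Lemma multiplier_sub_unit (A B : Z) : multiplier A -> multiplier B ->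
  A != B -> A - B \is a GRing.unit.
Proof.
rewrite unitZ_in_pZ.
case=> [-> | [f fP ->]] [-> | [g gP ->]]; rewrite ?eqxx //.
- by rewrite add0r in_pZN -unitZ_in_pZ (valP g).
- by rewrite subr0 -unitZ_in_pZ (valP f).
- by apply: contra => /(Phi_inj_modp fP gP) ->.
Qed.

Lemma Zmul_planar_eq (a b d : Z) : ~ ncong mul a b ->
  exists! x : Z, mul x a = mul x b + d.
Proof.
move=> not_ab; have [A mA HA] := ZmulP a; have [B mB HB] := ZmulP b.
have AB_unit : A - B \is a GRing.unit.
  apply: multiplier_sub_unit => //; apply/eqP => eAB; apply: not_ab => x.
  by rewrite HA HB eAB.
have eq_solve x : (x * A = x * B + d) <-> (x = d / (A - B)).
  rewrite -[x * A](subrK (x * B)) -mulrBr addrC.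
  by split=> [/addrI <- | ->]; rewrite ?mulrK ?divrK.
exists (d / (A - B)); split => [|x]; rewrite HA HB; first exact/eq_solve.
by move/eq_solve.
Qed.

Lemma Zmul_three_classes : (2 < p)%N ->
  exists a b d : Z, [/\ ~ ncong mul a b, ~ ncong mul a d & ~ ncong mul b d].
Proof.
move=> p_gt2; have /trivgPn[g gP g_neq1] : Phi :!=: 1%G.
  by rewrite -cardG_gt1 card_Phi; lia.
have hc : ~~ in_pZ c by rewrite -unitZ_in_pZ.
have hcg : ~~ in_pZ (c * val g) by rewrite in_pZMr ?(valP g).
exists 0, c, (c * val g); split => /(_ 1).
- by rewrite Zmul0 ?in_pZ0 // ZmulE // phi_of_c mul1r => /esym/eqP; rewrite oner_eq0.
- rewrite Zmul0 ?in_pZ0 // ZmulE // phi_of_cM // mul1r => g0.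
  by move: (valP g); rewrite -g0 unitr0.
- rewrite ZmulE // ZmulE // phi_of_c phi_of_cM // !mul1r => g1.
  by move: g_neq1; rewrite -(inj_eq val_inj) val_unit1 -g1 eqxx.
Qed.

Lemma Zmul_pZl (n x : Z) : in_pZ n -> mul n x = n * x / c.
Proof.
move=> hn; have [hx | hx] := boolP (in_pZ x).
  by rewrite Zmul0 // (in_pZ_mul0 hn hx) mul0r.
have [f fP [ef hf]] := phi_ofP hx.
by apply/eqP; rewrite ZmulE // ef -subr_eq0 -mulrA -mulrBr (in_pZ_mul0 hn hf).
Qed.

Lemma distrib_elt_pZ (n : Z) : in_pZ n -> distrib_elt mul n.
Proof. by move=> hn a b; rewrite !Zmul_pZl // mulrDr mulrDl. Qed.

Lemma cnatr_notin_pZ (k : nat) : (0 < k < p)%N -> ~~ in_pZ (c * k%:R).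
Proof.
case/andP=> k_gt0 k_ltp; rewrite in_pZM negb_or -unitZ_in_pZ c_unit in_pZ_natr.
by apply: contraTN k_ltp => /(dvdn_leq k_gt0); rewrite -leqNgt.
Qed.

Section DistributiveUnit.

Variable n : Z.
Hypotheses (n_unit : n \is a GRing.unit) (n_distr : distrib_elt mul n).

Lemma phi_ofD (a b : Z) : ~~ in_pZ a -> ~~ in_pZ b -> ~~ in_pZ (a + b) ->
  phi_of Phi c (a + b) = phi_of Phi c a + phi_of Phi c b.
Proof.
move=> ha hb hab; apply: (mulrI n_unit).
by have := n_distr a b; rewrite !ZmulE // mulrDr.
Qed.

Lemma phi_of_cnatr (k : nat) : (0 < k < p)%N -> phi_of Phi c (c * k%:R) = k%:R.
Proof.
elim: k => [// | [_ _ | k IH /andP[_ k_ltp]]]; first by rewrite mulr1 phi_of_c.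
have hk : (0 < k.+1 < p)%N by rewrite /= ltnW.
have hk2 := @cnatr_notin_pZ k.+2 k_ltp.
rewrite mulrSr mulrDr mulr1 in hk2 *.
by rewrite phi_ofD ?IH ?phi_of_c ?cnatr_notin_pZ // -unitZ_in_pZ.
Qed.

Lemma natr_in_Phi (k : nat) : (0 < k < p)%N ->
  exists2 f : {unit Z}, f \in Phi & val f = k%:R.
Proof.
move=> hk; have [f fP [ef _]] := phi_ofP (cnatr_notin_pZ hk).
by exists f; rewrite // -ef phi_of_cnatr.
Qed.

End DistributiveUnit.

Lemma unit_not_distrib (n : Z) : odd p -> n \is a GRing.unit -> ~ distrib_elt mul n.
Proof.
move=> p_odd n_unit n_distr.
have p_gt2 := odd_prime_gt2 p_odd.
pose m := p.+1./2.
have m2E : (m * 2 = p.+1)%N by rewrite muln2 -[RHS](odd_double_half p.+1) /= p_odd.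
have [f2 f2P f2E] := @natr_in_Phi n n_unit n_distr 2 p_gt2.
have [|fm fmP fmE] := @natr_in_Phi n n_unit n_distr m; first lia.
have fmf2E : val (fm * f2)%g = 1 + p%:R by rewrite val_unitM fmE f2E -natrM m2E mulrS.
have /(congr1 val) : (fm * f2 = 1)%g.
  by apply: Phi_inj_modp; rewrite ?groupM // fmf2E val_unit1 addrC addKr in_pZ_charp.
rewrite fmf2E val_unit1 => /(canRL (addKr 1)); rewrite addNr => /eqP.
by rewrite (negbTE natr_p_neq0).
Qed.

Lemma distrib_eltE (n : Z) : odd p -> distrib_elt mul n <-> in_pZ n.
Proof.
move=> p_odd; split; last exact: distrib_elt_pZ.
have [// | n_nunit /(unit_not_distrib p_odd) []] := boolP (in_pZ n).
by rewrite unitZ_in_pZ.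
Qed.

End Phi.
End ModP.

Unset Implicit Arguments.

Theorem mainTheorem13 (p : nat) (Phi : {group {unit 'Z_(p ^ 2)}})
    (c : 'Z_(p ^ 2)) :
  prime p -> odd p -> #|Phi| = (p - 1)%N -> c \is a GRing.unit ->
  [/\ nearring (Zmul Phi c),
      planar (Zmul Phi c),
      (forall n : 'Z_(p ^ 2), distrib_elt (Zmul Phi c) n <-> in_pZ n)
    & (forall n : 'Z_(p ^ 2), distrib_elt (Zmul Phi c) n -> zero_mult (Zmul Phi c) n)].
Proof.
move=> p_pr p_odd card_Phi c_unit.
have distrE n := distrib_eltE p_pr card_Phi c_unit n p_odd.
split=> [|| n | n /distrE n_pZ x].
- by split; [apply: Zmul_assoc | apply: Zmul_addl].
- split; last exact: Zmul_planar_eq.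
  exact/Zmul_three_classes/odd_prime_gt2.
- exact: distrE.
- exact: Zmul0.
Qed.
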